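(* Let $\kappa$ be a constancy measure. Then $\mathrm H^\kappa$ is an unbiased cooperative game mapping satisfying (Bound$_{CG}$), (Dic$_{CG}$), (Dum$_{CG}$) and (Type$_{CG}$). Moreover, for $\kappa=\kappa_{\mathrm{quad}}$, $\mathrm H^{\kappa}$ is chain-rule decomposable and satisfies (ModEC$_{CG}$).
   Context: $X$ is a fixed finite set of variables. An assignment over $U\subseteq X$ is a map $\mathbf u:U\to\{0,1\}$; for $\mathbf v$ over $V$, the cofactor is $f_{\mathbf v}(\mathbf u)=f(\mathbf v;\mathbf u_{X\setminus V})$ ($;$ concatenation, $\mathbf u_{S}$ restriction); $f_{x/c}$ for $V=\{x\}$. For $\mathbf u$ over $X$, $\mathbf u^{\oplus\{y\}}$ flips the value of $y$ and $f^{\oplus y}(\mathbf u)=f(\mathbf u^{\oplus\{y\}})$. $\mathbb B(X)$ is the set of Boolean functions $\{0,1\}^X\to\{0,1\}$, combined pointwise, $\overline f$ negation, a variable $x$ also denotes $\mathbf u\mapsto\mathbf u(x)$, $\ge$ pointwise. $\mathrm{dep}(f)=\{x:f_{x/1}\ne f_{x/0}\}$; $f$ monotone in $x$ if $f_{x/1}\ge f_{x/0}$. For a permutation $\sigma$ of $X$: $(\sigma\mathbf u)(x)=\mathbf u(\sigma^{-1}(x))$, $(\sigma f)(\mathbf u)=f(\sigma^{-1}\mathbf u)$. $f[x/s]=sf_{x/1}\lor\overline sf_{x/0}$. $\mathbb E$ is uniform expectation. Modularity: $f$ is modular in $g$ if $g$ is not constant and there are $\ell\in\mathbb B(X)$,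 $z\in X$ with $\mathrm{dep}(\ell)\cap\mathrm{dep}(g)=\emptyset$ and $f=\ell[z/g]$; monotonically modular if moreover $\ell$ is monotone in $z$. Then $f_{g/1}:=\ell_{z/1}$, $f_{g/0}:=\ell_{z/0}$, and $f[g/w]:=wf_{g/1}\lor\overline wf_{g/0}$. Cooperative games $v:2^X\to\mathbb R$, combined/compared pointwise; $\partial_xv(S)=v(S\cup\{x\})-v(S\setminus\{x\})$. A CGM is a map $f\mapsto\tau_f$ from $\mathbb B(X)$ to cooperative games. Properties, for all $x,y\in X$, permutations $\sigma$, $f,g,h$: (Bound$_{CG}$) $0\le\partial_x\tau_f\le1$; (Dum$_{CG}$) $\partial_x\tau_f=0$ if $x\notin\mathrm{dep}(f)$; (Dic$_{CG}$) $\partial_x\tau_x=\partial_x\tau_{\overline x}=1$; (Type$_{CG}$) $\tau_f(S)=\tau_{\sigma f}(\sigma(S))$ and $\tau_f(S)=\tau_{f^{\oplus y}}(S)$ for all $S$; (ModEC$_{CG}$) $\partial_x\tau_f\ge\partial_x\tau_h$ whenever $f,h$ are monotonically modular in $g$, $f_{g/1}\ge h_{g/1}$, $h_{g/0}\ge f_{g/0}$, $x\in\mathrm{dep}(g)$. $\tau$ is unbiased if $\tau_g=\tau_{\overline g}$; chain-rule decomposable if for all $f$ modular in $g$ and $x\in\mathrm{dep}(g)$: $\partial_x\tau_f=(\partial_x\tau_g)(\partial_{x_g}\tau_{f[g/x_g]})$ for a variable $x_g\notin\mathrm{dep}(f)$. A constancy measure is $\kappa:[0,1]\to[0,1]$ that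 is convex with $\kappa(0)=1$, $\kappa(a)=\kappa(1-a)$ and $\kappa(1/2)=0$; $\kappa_{\mathrm{quad}}(a)=4(a-1/2)^2$. The CGM $\mathrm H^\kappa$ is $\mathrm H^\kappa_f(S)=\mathbb E_{\mathbf a\in\{0,1\}^S}\big[\kappa(\mathbb E[f_{\mathbf a}])\big]$ (uniform over $\mathbf a$). *)

From mathcomp Require Import all_boot all_order all_algebra all_fingroup.
Set Implicit Arguments. Unset Strict Implicit. Unset Printing Implicit Defensive.
Import Order.TTheory GRing.Theory Num.Theory.
Local Open Scope ring_scope.

Section Defs.
Variable X : finType.

Definition asgT := {ffun X -> bool}.
Definition bfun := asgT -> bool.

(* assignments over S : encoded as total assignments that are 0 outside S
   (a bijection with {0,1}^S) *)
Definition asg (S : {set X}) : {set asgT} :=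
  [set a : asgT | [forall x, (x \notin S) ==> ~~ a x]].

Definition cofS (f : bfun) (S : {set X}) (a : asgT) : bfun :=
  fun u => f [ffun x => if x \in S then a x else u x].

Definition upd (u : asgT) (x : X) (c : bool) : asgT :=
  [ffun y => if y == x then c else u y].
Definition cof (f : bfun) (x : X) (c : bool) : bfun := fun u => f (upd u x c).

Definition varf (x : X) : bfun := fun u => u x.
Definition negf (f : bfun) : bfun := fun u => ~~ f u.

Definition dep (f : bfun) : pred X :=
  fun x => [exists u : asgT, cof f x true u != cof f x false u].

Definition monotone_in (f : bfun) (x : X) : Prop :=
  forall u, cof f x false u ==> cof f x true u.

Definition bconst (g : bfun) : Prop := exists c : bool, forall u, g u = c.

Definition bsubst (l : bfun) (z : X) (s : bfun) : bfun :=
  fun u => (s u && cof l z true u) || (~~ s u && cof l z false u).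

Definition modular_wit (f g l : bfun) (z : X) : Prop :=
  ~ bconst g /\ (forall x, ~~ (dep l x && dep g x)) /\ (forall u, f u = bsubst l z g u).

Definition mon_modular_wit (f g l : bfun) (z : X) : Prop :=
  modular_wit f g l z /\ monotone_in l z.

Definition perm_asg (s : {perm X}) (u : asgT) : asgT := [ffun x => u ((s^-1)%g x)].
Definition perm_bf (s : {perm X}) (f : bfun) : bfun := fun u => f (perm_asg (s^-1)%g u).
Definition flip (u : asgT) (y : X) : asgT :=
  [ffun x => if x == y then ~~ u x else u x].
Definition flip_bf (f : bfun) (y : X) : bfun := fun u => f (flip u y).

Variable R : realFieldType.

Definition mean (f : bfun) : R :=
  (\sum_(u : asgT) (f u)%:R) / (#|{: asgT}|)%:R.

Definition game := {set X} -> R.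
Definition deriv (x : X) (v : game) : game :=
  fun S => v (S :|: [set x]) - v (S :\ x).

Definition CGM := bfun -> game.

Definition Bound (tau : CGM) : Prop :=
  forall f x S, 0 <= deriv x (tau f) S <= 1.
Definition Dum (tau : CGM) : Prop :=
  forall f x, ~~ dep f x -> forall S, deriv x (tau f) S = 0.
Definition Dic (tau : CGM) : Prop :=
  forall x S, deriv x (tau (varf x)) S = 1 /\ deriv x (tau (negf (varf x))) S = 1.
Definition TypeCG (tau : CGM) : Prop :=
  (forall (s : {perm X}) f S, tau f S = tau (perm_bf s f) (s @: S)) /\
  (forall y f S, tau f S = tau (flip_bf f y) S).
Definition ModEC (tau : CGM) : Prop :=
  forall f h g lf zf lh zh,
    mon_modular_wit f g lf zf -> mon_modular_wit h g lh zh ->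
    (forall u, cof lh zh true u ==> cof lf zf true u) ->   (* f_{g/1} >= h_{g/1} *)
    (forall u, cof lf zf false u ==> cof lh zh false u) -> (* h_{g/0} >= f_{g/0} *)
    forall x, dep g x -> forall S, deriv x (tau h) S <= deriv x (tau f) S.
Definition unbiased (tau : CGM) : Prop := forall g S, tau g S = tau (negf g) S.
(* f[g/x_g] = x_g f_{g/1} \/ ~x_g f_{g/0} = l[z/x_g] *)
Definition chain_rule (tau : CGM) : Prop :=
  forall f g l z, modular_wit f g l z ->
  forall x, dep g x -> forall xg, ~~ dep f xg -> forall S,
    deriv x (tau f) S =
    deriv x (tau g) S * deriv xg (tau (bsubst l z (varf xg))) S.

Definition in01 (a : R) := (0 <= a <= 1).
Definition constancy (k : R -> R) : Prop :=
  (forall a, in01 a -> in01 (k a)) /\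
  (forall a b t, in01 a -> in01 b -> in01 t ->
     k (t * a + (1 - t) * b) <= t * k a + (1 - t) * k b) /\
  k 0 = 1 /\ (forall a, in01 a -> k a = k (1 - a)) /\ k (1 / 2) = 0.
Definition kquad (a : R) : R := 4 * (a - 1 / 2) ^+ 2.

Definition Hk (k : R -> R) : CGM := fun f S =>
  (\sum_(a in asg S) k (mean (cofS f S a))) / (#|asg S|)%:R.

End Defs.

From Pilot Require Import Defs.
From mathcomp Require Import all_boot all_order all_algebra all_fingroup.
From mathcomp Require Import ring lra.
Set Implicit Arguments. Unset Strict Implicit. Unset Printing Implicit Defensive.
Import Order.TTheory GRing.Theory Num.Theory.
Local Open Scope ring_scope.

(* All quantities are written as uniform expectations [Ex] over total
   assignments u : X -> bool.  Let [condmean f S u] be the mean of the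
   cofactor of f fixing the variables of S as in u.  Averaging over the
   variables outside S changes nothing, so H^kappa_f(S) = Ex[kappa(condmean f S)]
   ([Hk_Ex]).  Splitting the expectation on the value of x gives
     d_x H^kappa_f(S) = Ex[jgap kappa a1 a0],   a_c = condmean f_{x/c} S,
   where [jgap kappa a b] = (kappa a + kappa b)/2 - kappa((a+b)/2) is the
   Jensen gap of kappa ([deriv_Hk]).  Bound, dummy, dictator and unbiasedness
   then follow pointwise from the axioms of a constancy measure, and type
   invariance from reindexing expectations along bijections of assignments.
   For kappa_quad the Jensen gap is (a1 - a0)^2, the square of the mean
   discrete derivative [dmean].  When f = l[z/g] with dep l, dep g disjoint,
   the discrete derivative of f in x in dep g is that of g in x times that of
   l in z; the two factors depend on disjoint sets of variables, hence their
   expectations multiply ([Ex_indep]).  This gives the chain rule and, with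
   the ordering of the cofactors of the two outer functions, ModEC. *)

Section HkGame.
Variable X : finType.
Variable R : realFieldType.
Local Notation asgT := (asgT X).
Local Notation bfun := (bfun X).

Definition nasg : nat := #|{: asgT}|.
Definition Ex (F : asgT -> R) : R := (\sum_(u : asgT) F u) / nasg%:R.

Lemma nasg_neq0 : (nasg%:R : R) != 0.
Proof. by rewrite pnatr_eq0 -lt0n; apply/card_gt0P; exists [ffun => false]. Qed.

Lemma Ex_ext F G : (forall u, F u = G u) -> Ex F = Ex G.
Proof. by move=> FG; rewrite /Ex; congr (_ / _); apply: eq_bigr. Qed.

Lemma Ex_cst c : Ex (fun _ => c) = c.
Proof.
rewrite /Ex sumr_const.
have -> : #|[pred _ : asgT | true]| = nasg by apply: eq_card.
by rewrite -[c *+ _]mulr_natr mulfK // nasg_neq0.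
Qed.

Lemma Ex_le F G : (forall u, F u <= G u) -> Ex F <= Ex G.
Proof.
by move=> FG; rewrite /Ex ler_wpM2r ?invr_ge0 ?ler0n //; apply: ler_sum.
Qed.

Lemma Ex_ge0 F : (forall u, 0 <= F u) -> 0 <= Ex F.
Proof. by move=> F0; rewrite -(Ex_cst 0); apply: Ex_le. Qed.

Lemma Ex_in01 F : (forall u, in01 (F u)) -> in01 (Ex F).
Proof.
move=> F01; apply/andP; split.
  by apply: Ex_ge0 => u; case/andP: (F01 u).
by rewrite -[leRHS](Ex_cst 1); apply: Ex_le => u; case/andP: (F01 u).
Qed.

Lemma Ex_add F G : Ex (fun u => F u + G u) = Ex F + Ex G.
Proof. by rewrite /Ex big_split /= mulrDl. Qed.

Lemma Ex_sub F G : Ex (fun u => F u - G u) = Ex F - Ex G.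
Proof. by rewrite /Ex sumrB mulrBl. Qed.

Lemma Ex_mulr F c : Ex (fun u => F u * c) = Ex F * c.
Proof. by rewrite /Ex -mulr_suml mulrAC. Qed.

Lemma Ex_reindex (h : asgT -> asgT) F : injective h -> Ex (fun u => F (h u)) = Ex F.
Proof. by move=> hi; rewrite /Ex [in RHS](reindex_inj hi). Qed.

Lemma upd_id (u : asgT) x : upd u x (u x) = u.
Proof. by apply/ffunP => y; rewrite ffunE; case: eqP => // ->. Qed.

Lemma upd_at (u : asgT) x c : upd u x c x = c.
Proof. by rewrite ffunE eqxx. Qed.

Lemma upd_upd (u : asgT) x c c' : upd (upd u x c) x c' = upd u x c'.
Proof. by apply/ffunP => y; rewrite !ffunE; case: eqP. Qed.

Lemma upd_comm (u : asgT) x y c c' : x != y ->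
  upd (upd u x c) y c' = upd (upd u y c') x c.
Proof.
move=> nxy; apply/ffunP => w; rewrite !ffunE.
by case: (eqVneq w y) => [->|//]; rewrite eq_sym (negbTE nxy).
Qed.

Lemma flip_inj x : injective (fun u : asgT => flip u x).
Proof.
apply: (can_inj (g := fun u => flip u x)) => u.
by apply/ffunP => y; rewrite !ffunE; case: eqP => // ->; rewrite negbK.
Qed.

Definition merge (S : {set X}) (u w : asgT) : asgT :=
  [ffun x => if x \in S then u x else w x].

(* Averaging over the two values of x: E[H] = (E[H_{x/1}] + E[H_{x/0}]) / 2,
   since u |-> flip u x is a bijection exchanging the two halves. *)
Lemma Ex_split (H : asgT -> R) x :
  Ex H = (Ex (fun u => H (upd u x true)) + Ex (fun u => H (upd u x false))) / 2.
Proof.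
have pair u : H (upd u x true) + H (upd u x false) = H u + H (flip u x).
  have upd_flip : upd u x (~~ u x) = flip u x.
    by apply/ffunP => y; rewrite !ffunE; case: eqP => // ->.
  move: (upd_id u x) upd_flip; case: (u x) => -> <- //.
  by rewrite addrC.
rewrite -Ex_add (Ex_ext pair) Ex_add (Ex_reindex H (@flip_inj x)).
by rewrite -mulr2n -[_ *+ 2]mulr_natr mulfK // pnatr_eq0.
Qed.

Lemma sum_merge S (H : asgT -> R) :
  \sum_(w : asgT) \sum_(w' : asgT) H (merge S w w') = (\sum_(v : asgT) H v) *+ nasg.
Proof.
have swapK : involutive (fun p : asgT * asgT => (merge S p.1 p.2, merge S p.2 p.1)).
  by case=> a b; congr (_, _); apply/ffunP => y; rewrite !ffunE; case: (y \in S).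
have merge_swap p : merge S (merge S p.1 p.2) (merge S p.2 p.1) = p.1.
  by apply/ffunP => y; rewrite !ffunE; case: (y \in S).
rewrite pair_bigA /= (reindex_inj (inv_inj swapK)) /=.
under eq_bigr => p _ do rewrite merge_swap.
rewrite -(pair_bigA _ (fun a (_ : asgT) => H a)) /= -sumrMnl.
apply: eq_bigr => a _; rewrite sumr_const.
by have -> : #|[pred _ : asgT | true]| = nasg by apply: eq_card.
Qed.

Definition depends_on (T : Type) (F : asgT -> T) (P : pred X) : Prop :=
  forall w w' : asgT, (forall y, P y -> w y = w' y) -> F w = F w'.

Lemma Ex_indep (D : {set X}) (G L : asgT -> R) :
  depends_on G (fun y => y \in D) -> depends_on L (fun y => y \notin D) ->
  Ex (fun u => G u * L u) = Ex G * Ex L.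
Proof.
move=> hG hL.
rewrite /Ex mulrACA -invfM [in RHS]mulr_suml.
have -> : \sum_(w : asgT) G w * (\sum_(u : asgT) L u) =
    \sum_(w : asgT) \sum_(w' : asgT) G (merge D w w') * L (merge D w w').
  apply: eq_bigr => w _; rewrite mulr_sumr; apply: eq_bigr => w' _.
  congr (_ * _); [apply: hG => y yD | apply: hL => y /negbTE yD];
    by rewrite ffunE ?yD.
rewrite (sum_merge D (fun v => G v * L v)); set s := \sum_(v : asgT) _.
by rewrite -[s *+ _]mulr_natr invfM mulrA mulfK // nasg_neq0.
Qed.

Lemma depends_on_sub T (F : asgT -> T) (P Q : pred X) :
  depends_on F P -> {subset P <= Q} -> depends_on F Q.
Proof. by move=> hF PQ w w' ww'; apply: hF => y /PQ; apply: ww'. Qed.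

Lemma depends_on_upd T (F : asgT -> T) P x c :
  depends_on F P -> depends_on (fun v => F (upd v x c)) P.
Proof.
by move=> hF w w' ww'; apply: hF => y Py; rewrite !ffunE; case: eqP => // _; apply: ww'.
Qed.

Lemma depends_on_merge_l T (F : asgT -> T) P S w :
  depends_on F P -> depends_on (fun u => F (merge S u w)) P.
Proof.
by move=> hF u u' uu'; apply: hF => y Py; rewrite !ffunE; case: ifP => // _; apply: uu'.
Qed.

Lemma depends_on_merge_r T (F : asgT -> T) P S u :
  depends_on F P -> depends_on (fun w => F (merge S u w)) P.
Proof.
by move=> hF w w' ww'; apply: hF => y Py; rewrite !ffunE; case: ifP => // _; apply: ww'.
Qed.

Lemma nodep_upd (g : bfun) x : ~~ dep g x -> forall w c, g (upd w x c) = g w.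
Proof.
move=> nd.
have g10 w : g (upd w x true) = g (upd w x false).
  by move: nd; rewrite /dep negb_exists => /forallP /(_ w); rewrite negbK => /eqP.
by move=> w c; rewrite -{2}(upd_id w x); case: c; case: (w x); rewrite ?g10.
Qed.

Lemma nodep_upd_comm (l : bfun) x z : ~~ dep l x ->
  forall v c b, l (upd (upd v x c) z b) = l (upd v z b).
Proof.
move=> nd v c b; case: (eqVneq x z) => [->|ne]; first by rewrite upd_upd.
by rewrite upd_comm // nodep_upd.
Qed.

(* A Boolean function depends only on its essential variables; proved by
   induction on the number of variables on which two assignments differ. *)
Lemma depends_on_dep (g : bfun) : depends_on g (dep g).
Proof.
move=> v v'; move Hn : #|[set x | v x != v' x]| => n.
elim: n v Hn => [|n IH] v Hn agree.
  have -> // : v = v'.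
  apply/ffunP => y; apply/eqP; apply: contraT => ne.
  by move/cards0_eq/setP/(_ y): Hn; rewrite !inE ne.
have [x xin] : exists x, x \in [set x | v x != v' x].
  by apply/set0Pn; rewrite -card_gt0 Hn.
have ndx : ~~ dep g x.
  by apply/negP => dx; move: xin; rewrite inE (agree x dx) eqxx.
rewrite -(nodep_upd ndx v (v' x)); apply: IH; last first.
  by move=> y dy; rewrite ffunE; case: eqP => [->|_] //; apply: agree.
have -> : [set y | upd v x (v' x) y != v' y] = [set y | v y != v' y] :\ x.
  apply/setP => y; rewrite !inE ffunE.
  by case: (eqVneq y x) => [->|//]; rewrite !eqxx.
by move: Hn; rewrite (cardsD1 x) xin add1n => -[].
Qed.

Definition condmean (f : bfun) (S : {set X}) (u : asgT) : R :=
  Ex (fun w => (f (merge S u w))%:R).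

Lemma condmean_in01 f S u : in01 (condmean f S u).
Proof. by apply: Ex_in01 => w; case: (f _); rewrite /in01 /= ?lexx ?ler01. Qed.

(* Restriction of an assignment to S: it maps onto asg S, and all its
   fibres are translates (by xor) of the fibre over the zero assignment. *)
Definition restr (S : {set X}) (u : asgT) : asgT := [ffun x => (x \in S) && u x].
Definition fibre_size (S : {set X}) : nat :=
  #|[set u : asgT | restr S u == [ffun => false]]|.

Lemma restr_asg S u : restr S u \in asg S.
Proof.
by rewrite inE; apply/forallP => x; apply/implyP => nx; rewrite ffunE (negbTE nx).
Qed.

Lemma card_fibre S a : a \in asg S -> #|[set u | restr S u == a]| = fibre_size S.
Proof.
rewrite inE => /forallP a0out.
pose xor_a := fun u : asgT => [ffun x => a x (+) u x].
have xor_aK : involutive xor_a.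
  by move=> u; apply/ffunP => x; rewrite !ffunE addbA addbb.
rewrite /fibre_size.
have -> : [set u | restr S u == [ffun => false]] = xor_a @^-1: [set u | restr S u == a].
  apply/setP => u; rewrite !inE.
  apply/eqP/eqP => /ffunP hu; apply/ffunP => x; move: (hu x); rewrite !ffunE.
    case: (boolP (x \in S)) => xS /=; first by move=> ->; rewrite addbF.
    by move/implyP: (a0out x) => /(_ xS) /negbTE ->.
  by case: (x \in S) => //=; case: (a x); case: (u x).
by rewrite card_preimset //; apply: inv_inj.
Qed.

Lemma fibre_size_gt0 S : (0 < fibre_size S)%N.
Proof.
apply/card_gt0P; exists [ffun => false].
by rewrite inE; apply/eqP/ffunP => x; rewrite !ffunE andbF.
Qed.

Lemma sum_restr S (F : asgT -> R) :
  \sum_(u : asgT) F (restr S u) = (\sum_(a in asg S) F a) *+ fibre_size S.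
Proof.
rewrite (partition_big (restr S) (mem (asg S))) /=; last by move=> u _; apply: restr_asg.
rewrite -sumrMnl; apply: eq_bigr => a aS.
rewrite (eq_bigr (fun _ => F a)); last by move=> u /eqP ->.
rewrite sumr_const -(card_fibre aS); congr (_ *+ _).
by apply: eq_card => u; rewrite inE.
Qed.

Lemma Hk_Ex k f S : Hk k f S = Ex (fun u => k (condmean f S u)).
Proof.
have condmean_restr u : condmean f S u = condmean f S (restr S u).
  apply: Ex_ext => w; congr (f _)%:R.
  by apply/ffunP => x; rewrite !ffunE; case: (x \in S).
rewrite (Ex_ext (fun u => congr1 k (condmean_restr u))) /Ex.
rewrite (sum_restr S (fun a => k (condmean f S a))).
have -> : (nasg%:R : R) = #|asg S|%:R *+ fibre_size S.
  have := sum_restr S (fun _ => 1); rewrite !sumr_const.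
  by have -> : #|[pred _ : asgT | true]| = nasg by apply: eq_card.
have fs_neq0 : (fibre_size S)%:R != 0 :> R by rewrite pnatr_eq0 -lt0n fibre_size_gt0.
set s := \sum_(a in asg S) _.
rewrite -[s *+ _]mulr_natr -[#|asg S|%:R *+ _]mulr_natr.
by rewrite invfM mulrACA divff // mulr1.
Qed.

Lemma condmean_setU1 f S x u :
  condmean f (S :|: [set x]) u = condmean (cof f x (u x)) S u.
Proof.
apply: Ex_ext => w; congr (f _)%:R; apply/ffunP => y; rewrite !ffunE in_setU in_set1.
by case: (eqVneq y x) => [->|]; rewrite ?orbT ?orbF.
Qed.

Lemma condmean_setD1 f S x u :
  condmean f (S :\ x) u =
  (condmean (cof f x true) S u + condmean (cof f x false) S u) / 2.
Proof.
rewrite /condmean (Ex_split _ x); congr ((_ + _) / _); apply: Ex_ext => w;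
  by congr (f _)%:R; apply/ffunP => y; rewrite !ffunE in_setD1; case: (eqVneq y x).
Qed.

Lemma condmean_cof_upd f S x c c' u :
  condmean (cof f x c) S (upd u x c') = condmean (cof f x c) S u.
Proof.
apply: Ex_ext => w; congr (f _)%:R; apply/ffunP => y; rewrite !ffunE.
by case: (eqVneq y x).
Qed.

Definition jgap (k : R -> R) (a b : R) : R := (k a + k b) / 2 - k ((a + b) / 2).

Lemma deriv_Hk k f S x :
  Defs.deriv x (Hk k f) S =
  Ex (fun u => jgap k (condmean (cof f x true) S u) (condmean (cof f x false) S u)).
Proof.
rewrite /Defs.deriv !Hk_Ex (Ex_ext (fun u => congr1 k (condmean_setU1 f S x u))).
rewrite (Ex_ext (fun u => congr1 k (condmean_setD1 f S x u))).
rewrite (Ex_split (fun u => k (condmean (cof f x (u x)) S u)) x) -Ex_add -Ex_mulr -Ex_sub.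
by apply: Ex_ext => u; rewrite !upd_at !condmean_cof_upd.
Qed.

Lemma jgap_diag k a : jgap k a a = 0.
Proof.
have half_double c : (c + c) / 2 = c :> R by field.
by rewrite /jgap !half_double subrr.
Qed.

Lemma jgap_sym k a b : jgap k a b = jgap k b a.
Proof. by rewrite /jgap [k a + _]addrC [a + b]addrC. Qed.

Lemma condmean_negf g S u : condmean (negf g) S u = 1 - condmean g S u.
Proof.
rewrite -[1](Ex_cst 1) -Ex_sub; apply: Ex_ext => w.
by rewrite /negf; case: (g _); rewrite ?subr0 ?subrr.
Qed.

Lemma condmean_cst (h : bfun) b S u : (forall v, h v = b) -> condmean h S u = b%:R.
Proof. by move=> hb; rewrite -[RHS](Ex_cst b%:R); apply: Ex_ext => w; rewrite hb. Qed.

Section Constancy.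
Variable k : R -> R.
Hypothesis hk : constancy k.

Lemma k_in01 a : in01 a -> in01 (k a).
Proof. by case: hk => h _; apply: h. Qed.

Lemma k_sym a : in01 a -> k a = k (1 - a).
Proof. by case: hk => _ [_ [_ [h _]]]; apply: h. Qed.

Lemma k_midconvex a b : in01 a -> in01 b -> k ((a + b) / 2) <= (k a + k b) / 2.
Proof.
case: hk => _ [h _] a01 b01.
have half01 : in01 (1 / 2 : R) by apply/andP; split; lra.
have := h a b (1 / 2) a01 b01 half01.
have -> : 1 / 2 * a + (1 - 1 / 2) * b = (a + b) / 2 by field.
by have -> : 1 / 2 * k a + (1 - 1 / 2) * k b = (k a + k b) / 2 by field.
Qed.

Lemma k_at1 : k 1 = 1.
Proof.
case: hk => _ [_ [k0 _]].
have zero01 : in01 (0 : R) by rewrite /in01 lexx ler01.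
by rewrite -{2}k0 (k_sym zero01) subr0.
Qed.

(* On [0,1] the Jensen gap of k lies in [0,1]: it is nonnegative by
   convexity and at most (k a + k b)/2 <= 1. *)
Lemma jgap_in01 a b : in01 a -> in01 b -> in01 (jgap k a b).
Proof.
move=> a01 b01.
have m01 : in01 ((a + b) / 2).
  by move: a01 b01 => /andP[? ?] /andP[? ?]; apply/andP; split; lra.
have := k_midconvex a01 b01.
move: (k_in01 a01) (k_in01 b01) (k_in01 m01) => /andP[? ?] /andP[? ?] /andP[? ?] ?.
by apply/andP; split; rewrite /jgap; lra.
Qed.

Lemma jgap_10 : jgap k 1 0 = 1.
Proof.
case: hk => _ [_ [k0 [_ khalf]]].
by rewrite /jgap k0 k_at1 addr0 khalf subr0; field.
Qed.

Lemma Bound_Hk : Bound (Hk (X:=X) k).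
Proof.
move=> f x S; rewrite deriv_Hk; apply: Ex_in01 => u.
by apply: jgap_in01; apply: condmean_in01.
Qed.

Lemma Dum_Hk : Dum (Hk (X:=X) k).
Proof.
move=> f x nd S; rewrite deriv_Hk -[RHS](Ex_cst 0); apply: Ex_ext => u.
have -> : condmean (cof f x true) S u = condmean (cof f x false) S u.
  by apply: Ex_ext => w; rewrite /cof !(nodep_upd nd).
exact: jgap_diag.
Qed.

Lemma Dic_Hk : Dic (Hk (X:=X) k).
Proof.
move=> x S; split; rewrite deriv_Hk -[RHS](Ex_cst 1); apply: Ex_ext => u.
  have dict c : condmean (cof (varf x) x c) S u = c%:R.
    by apply: condmean_cst => v; apply: upd_at.
  by rewrite !dict jgap_10.
have antidict c : condmean (cof (negf (varf x)) x c) S u = (~~ c)%:R.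
  by apply: condmean_cst => v; rewrite /cof /negf /varf upd_at.
by rewrite !antidict jgap_sym jgap_10.
Qed.

Lemma unbiased_Hk : unbiased (Hk (X:=X) k).
Proof.
move=> g S; rewrite !Hk_Ex; apply: Ex_ext => u.
by rewrite condmean_negf -k_sym //; apply: condmean_in01.
Qed.

End Constancy.

(* Type invariance: permuting or flipping variables reindexes both
   expectations defining H^kappa along a bijection of assignments. *)
Lemma perm_asg_inj (t : {perm X}) : injective (perm_asg t).
Proof.
move=> u v /ffunP e; apply/ffunP => y; have := e (t y).
by rewrite !ffunE permK.
Qed.

Lemma Type_Hk (k : R -> R) : TypeCG (Hk (X:=X) k).
Proof.
split=> [s f S | y f S]; rewrite !Hk_Ex.
  rewrite -[RHS](Ex_reindex _ (@perm_asg_inj s)); apply: Ex_ext => u; congr k.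
  rewrite /condmean -(Ex_reindex _ (@perm_asg_inj (s^-1)%g)); apply: Ex_ext => w.
  congr (f _)%:R; apply/ffunP => y; rewrite /perm_asg !ffunE invgK.
  by rewrite (mem_imset _ _ perm_inj) permK; case: (y \in S).
rewrite -[LHS](Ex_reindex _ (@flip_inj y)); apply: Ex_ext => u; congr k.
rewrite /condmean -(Ex_reindex _ (@flip_inj y)); apply: Ex_ext => w.
congr (f _)%:R; apply/ffunP => x; rewrite /flip_bf !ffunE.
by case: (x \in S); case: eqP.
Qed.

Definition ddiff (h : bfun) (x : X) (v : asgT) : R :=
  (h (upd v x true))%:R - (h (upd v x false))%:R.
Definition dmean (h : bfun) (S : {set X}) (x : X) (u : asgT) : R :=
  condmean (cof h x true) S u - condmean (cof h x false) S u.

Lemma dmeanE h S x u : dmean h S x u = Ex (fun w => ddiff h x (merge S u w)).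
Proof. by rewrite /dmean /condmean -Ex_sub. Qed.

Lemma jgap_kquad a b : jgap (@kquad R) a b = (a - b) ^+ 2.
Proof. by rewrite /jgap /kquad; field. Qed.

Lemma deriv_Hquad f S x :
  Defs.deriv x (Hk (@kquad R) f) S = Ex (fun u => dmean f S x u ^+ 2).
Proof. by rewrite deriv_Hk; apply: Ex_ext => u; rewrite jgap_kquad. Qed.

Lemma depends_on_ddiff h P x : depends_on h P -> depends_on (ddiff h x) P.
Proof.
move=> hh w w' ww'.
by rewrite /ddiff (depends_on_upd x true hh ww') (depends_on_upd x false hh ww').
Qed.

Lemma depends_on_dmean h P S x : depends_on h P -> depends_on (dmean h S x) P.
Proof.
move=> hh u u' uu'; rewrite !dmeanE; apply: Ex_ext => w.
exact: (depends_on_merge_l S w (depends_on_ddiff x hh)).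
Qed.

Lemma ddiff_bsubst l z g x v : ~~ dep l x ->
  ddiff (bsubst l z g) x v = ddiff g x v * ddiff l z v.
Proof.
move=> ndl; rewrite /ddiff /bsubst /cof !(nodep_upd_comm z ndl).
by case: (g (upd v x true)); case: (g (upd v x false));
  case: (l (upd v z true)); case: (l (upd v z false)); rewrite /=; lra.
Qed.

Section ChainRule.
Variables (f g l : bfun) (z : X).
Hypothesis f_mod : modular_wit f g l z.
Let D := [set y | dep g y].

Lemma g_local : depends_on g (fun y => y \in D).
Proof. by apply: (depends_on_sub (@depends_on_dep g)) => y; rewrite inE. Qed.

Lemma l_local : depends_on l (fun y => y \notin D).
Proof.
case: f_mod => _ [disj _]; apply: (depends_on_sub (@depends_on_dep l)) => y dl.
by rewrite unfold_in inE; move: (disj y); rewrite (dl : dep l y).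
Qed.

Lemma dmean_factor S x u : dep g x -> dmean f S x u = dmean g S x u * dmean l S z u.
Proof.
case: f_mod => _ [disj f_eq] dgx.
have ndl : ~~ dep l x by move: (disj x); rewrite dgx andbT.
rewrite !dmeanE.
rewrite (Ex_ext (G := fun w => ddiff g x (merge S u w) * ddiff l z (merge S u w))).
  by apply: (Ex_indep (D := D)); apply: depends_on_merge_r; apply: depends_on_ddiff;
    [apply: g_local | apply: l_local].
by move=> w; rewrite -ddiff_bsubst // /ddiff !f_eq.
Qed.

Lemma deriv_factor S x : dep g x ->
  Defs.deriv x (Hk (@kquad R) f) S =
  Defs.deriv x (Hk (@kquad R) g) S * Ex (fun u => dmean l S z u ^+ 2).
Proof.
move=> dgx; rewrite !deriv_Hquad.
under Ex_ext => u do rewrite (dmean_factor S u dgx) exprMn.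
apply: (Ex_indep (D := D)) => u u' uu'; congr (_ ^+ 2).
  exact: (depends_on_dmean S x g_local).
exact: (depends_on_dmean S z l_local).
Qed.

(* A variable xg not read by f is not read by l in z either: either xg is a
   variable of g, hence not of l, or g can be set to any value b without
   touching xg, so that l_{z/b} is a restriction of f. *)
Lemma l_ignores_free xg : ~~ dep f xg ->
  forall v c b, l (upd (upd v xg c) z b) = l (upd v z b).
Proof.
move=> ndf v c b.
case: f_mod => g_nconst [disj f_eq].
case: (boolP (dep g xg)) => [dg|ndg].
  by apply: nodep_upd_comm; move: (disj xg); rewrite dg andbT.
have [vb gvb] : exists vb, g vb = b.
  case: (pickP (fun v => g v == b)) => [vb /eqP gvb | none]; first by exists vb.
  exfalso; apply: g_nconst; exists (~~ b) => u.
  by move: (none u); clear none; case: (g u); case: b.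
pose w := merge D vb v.
have l_as_f c' : l (upd (upd v xg c') z b) = f w.
  rewrite -(nodep_upd ndf w c') f_eq /bsubst /cof.
  have -> : g (upd w xg c') = b.
    by rewrite (nodep_upd ndg) -gvb; apply: g_local => y yD; rewrite ffunE yD.
  have l_w b' : l (upd (upd w xg c') z b') = l (upd (upd v xg c') z b').
    apply: l_local => y /negbTE yD; rewrite !ffunE.
    by case: (y == z) => //; case: (y == xg) => //; rewrite yD.
  by rewrite !l_w; case: b gvb => _ /=; rewrite ?orbF.
by rewrite (l_as_f c) -(l_as_f (v xg)) upd_id.
Qed.

Lemma ddiff_bsubst_free xg v : ~~ dep f xg ->
  ddiff (bsubst l z (varf xg)) xg v = ddiff l z v.
Proof.
move=> ndf; rewrite /ddiff /bsubst /cof /varf !upd_at /= orbF.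
by rewrite !(l_ignores_free ndf).
Qed.

End ChainRule.

Lemma chain_Hquad : chain_rule (Hk (X:=X) (@kquad R)).
Proof.
move=> f g l z f_mod x dgx xg ndf S.
rewrite (deriv_factor f_mod S dgx); congr (_ * _).
rewrite deriv_Hquad; apply: Ex_ext => u; rewrite !dmeanE; congr (_ ^+ 2).
by apply: Ex_ext => w; rewrite (ddiff_bsubst_free f_mod _ ndf).
Qed.

Lemma dmean_ge0 l z S u : monotone_in l z -> 0 <= dmean l S z u.
Proof.
move=> mono; rewrite dmeanE; apply: Ex_ge0 => w; move: (mono (merge S u w)).
by rewrite /ddiff /cof; case: (l _); case: (l _) => //= _; lra.
Qed.

Lemma dmean_le lh zh lf zf S u :
  (forall v, cof lh zh true v ==> cof lf zf true v) ->
  (forall v, cof lf zf false v ==> cof lh zh false v) ->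
  dmean lh S zh u <= dmean lf S zf u.
Proof.
move=> le1 le0; rewrite !dmeanE; apply: Ex_le => w.
move: (le1 (merge S u w)) (le0 (merge S u w)); rewrite /ddiff /cof.
by case: (lh _); case: (lh _); case: (lf _); case: (lf _) => //= _ _; lra.
Qed.

Lemma ModEC_Hquad : ModEC (Hk (X:=X) (@kquad R)).
Proof.
move=> f h g lf zf lh zh [f_mod _] [h_mod h_mono] le1 le0 x dgx S.
rewrite (deriv_factor f_mod S dgx) (deriv_factor h_mod S dgx).
apply: ler_wpM2l; first by rewrite deriv_Hquad; apply: Ex_ge0 => u; apply: sqr_ge0.
apply: Ex_le => u; have lo := dmean_ge0 S u h_mono; have hi := dmean_le S u le1 le0.
by rewrite ler_sqr ?nnegrE // (le_trans lo hi).
Qed.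

End HkGame.

Theorem mainTheorem16 (R : realFieldType) (X : finType) (k : R -> R) :
  constancy k ->
  (unbiased (Hk (X:=X) k) /\ Bound (Hk (X:=X) k) /\ Dic (Hk (X:=X) k) /\
   Dum (Hk (X:=X) k) /\ TypeCG (Hk (X:=X) k)) /\
  (chain_rule (Hk (X:=X) (@kquad R)) /\ ModEC (Hk (X:=X) (@kquad R))).
Proof.
move=> hk; split.
  split; first exact: unbiased_Hk.
  split; first exact: Bound_Hk.
  split; first exact: Dic_Hk.
  by split; [exact: Dum_Hk | exact: Type_Hk].
by split; [exact: chain_Hquad | exact: ModEC_Hquad].
Qed.
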